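(* Let $H$ be a real Hilbert space, $A:H\to 2^H$ a maximally monotone operator, and $(\gamma_n)$ a sequence of positive reals. Then the family $(J_{\gamma_nA})_{n\in\mathbb{N}}$ is jointly firmly nonexpansive with respect to $(\gamma_n)$.
   Context: For $\gamma>0$, $J_{\gamma A}:=(id_H+\gamma A)^{-1}$, which is single-valued and defined on all of $H$. $(T_n)$ is jointly firmly nonexpansive w.r.t. $(\gamma_n)$ if for all $n,m\in\mathbb{N}$, $x,y\in H$, $\alpha,\beta\in[0,1]$ with $(1-\alpha)\gamma_n=(1-\beta)\gamma_m$: $\|T_nx-T_my\|\le\|((1-\alpha)x+\alpha T_nx)-((1-\beta)y+\beta T_my)\|$. *)

From HB Require Import structures.
From mathcomp Require Import all_boot all_order all_algebra.
From mathcomp Require Import all_classical all_reals topology normedtype.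
Set Implicit Arguments. Unset Strict Implicit. Unset Printing Implicit Defensive.
Import Order.TTheory GRing.Theory Num.Theory.
Import numFieldNormedType.Exports.
Local Open Scope classical_set_scope.
Local Open Scope ring_scope.

Definition is_hilbert_inner (R : realType) (H : completeNormedModType R)
  (ip : H -> H -> R) : Prop :=
  [/\ (forall x y, ip x y = ip y x),
      (forall a x y z, ip (a *: x + y) z = a * ip x z + ip y z),
      (forall x, 0 <= ip x x),
      (forall x, ip x x = 0 -> x = 0)
    & (forall x, `|x| ^+ 2 = ip x x)].

(* set-valued operators A : H -> 2^H are relations: A x is the set of values *)
Definition monotone_op (R : realType) (H : completeNormedModType R)
  (ip : H -> H -> R) (A : H -> set H) : Prop :=
  forall x y u v, A x u -> A y v -> 0 <= ip (x - y) (u - v).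

Definition maximally_monotone (R : realType) (H : completeNormedModType R)
  (ip : H -> H -> R) (A : H -> set H) : Prop :=
  monotone_op ip A /\
  forall B : H -> set H, monotone_op ip B ->
    (forall x u, A x u -> B x u) -> B = A.

(* resolvent J_{gamma A} = (id + gamma A)^{-1}, as a set-valued map:
   p \in J x  iff  x \in p + gamma A p *)
Definition resolvent (R : realType) (H : completeNormedModType R)
  (gamma : R) (A : H -> set H) : H -> set H :=
  fun x => [set p | exists a, A p a /\ x = p + gamma *: a].

Definition jointly_firmly_nonexpansive (R : realType) (H : completeNormedModType R)
  (T : nat -> H -> H) (gamma : nat -> R) : Prop :=
  forall (n m : nat) (x y : H) (alpha beta : R),
    0 <= alpha <= 1 -> 0 <= beta <= 1 ->
    (1 - alpha) * gamma n = (1 - beta) * gamma m ->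
    `|T n x - T m y| <=
      `|((1 - alpha) *: x + alpha *: T n x) - ((1 - beta) *: y + beta *: T m y)|.

From HB Require Import structures.
From mathcomp Require Import all_boot all_order all_algebra.
From mathcomp Require Import all_classical all_reals topology normedtype.
From mathcomp Require Import ring.
Import Order.TTheory GRing.Theory Num.Theory.
Import numFieldNormedType.Exports.
Local Open Scope classical_set_scope.
Local Open Scope ring_scope.

(* Write p = J_n x, so that x = p + gamma_n a with a in A p.  The relaxed point
   (1 - alpha) x + alpha p equals p + c a with c = (1 - alpha) gamma_n, and the
   coupling condition on alpha, beta makes the same c appear for y and q = J_m y.
   Then |(p - q) + c (a - b)|^2 = |p - q|^2 + 2c <p - q, a - b> + c^2 |a - b|^2,
   and the middle term is nonnegative by monotonicity of A. *)

Lemma relax_addZ (K : pzRingType) (V : lmodType K) (t g : K) (p a : V) :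
  (1 - t) *: (p + g *: a) + t *: p = p + ((1 - t) * g) *: a.
Proof. by rewrite scalerDr scalerA addrAC -scalerDl subrK scale1r. Qed.

Section InnerProduct.
Variables (R : realFieldType) (V : normedModType R) (ip : V -> V -> R).
Hypothesis ipC : forall x y, ip x y = ip y x.
Hypothesis ipDZl : forall a x y z, ip (a *: x + y) z = a * ip x z + ip y z.
Hypothesis ip_norm : forall x, `|x| ^+ 2 = ip x x.

Lemma sqr_normDZ (d e : V) (c : R) :
  `|d + c *: e| ^+ 2 = `|d| ^+ 2 + c *+ 2 * ip d e + c ^+ 2 * `|e| ^+ 2.
Proof.
rewrite !ip_norm (addrC d) ipDZl (ipC e) ipDZl (ipC d (_ + _)) ipDZl (ipC e d).
ring.
Qed.

Lemma ler_normDZ (d e : V) (c : R) :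
  0 <= c -> 0 <= ip d e -> `|d| <= `|d + c *: e|.
Proof.
move=> c0 de0.
rewrite -(@ler_pXn2r _ 2%N) ?nnegrE ?normr_ge0 // sqr_normDZ -addrA lerDl.
by apply: addr_ge0; apply: mulr_ge0; rewrite ?mulrn_wge0 ?sqr_ge0 ?ip_norm.
Qed.

Lemma ler_norm_subDZ (p q a b : V) (c : R) :
  0 <= c -> 0 <= ip (p - q) (a - b) ->
  `|p - q| <= `|(p + c *: a) - (q + c *: b)|.
Proof.
move=> c0 pqab0.
have -> : p + c *: a - (q + c *: b) = (p - q) + c *: (a - b).
  by rewrite scalerBr opprD addrACA.
exact: ler_normDZ.
Qed.

End InnerProduct.

Theorem proposition3p21 (R : realType) (H : completeNormedModType R)
  (ip : H -> H -> R) (Hip : is_hilbert_inner ip)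
  (A : H -> set H) (HA : maximally_monotone ip A)
  (gamma : nat -> R) (Hgamma : forall n, 0 < gamma n)
  (J : nat -> H -> H)
  (HJ : forall n x, resolvent (gamma n) A x (J n x)) :
  jointly_firmly_nonexpansive J gamma.
Proof.
case: Hip => ipC ipDZl _ _ ip_norm; case: HA => monoA _.
move=> n m x y al be /andP[_ al1] _ coupling.
have [a [Aa Ex]] := HJ n x; have [b [Ab Ey]] := HJ m y.
set p := J n x in Aa Ex *; set q := J m y in Ab Ey *.
rewrite Ex Ey !relax_addZ -coupling.
apply: (@ler_norm_subDZ R H ip ipC ipDZl ip_norm); last exact: monoA.
by apply: mulr_ge0; [rewrite subr_ge0 | exact: ltW].
Qed.
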